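(* Let $\mathcal{X},\mathcal{Y}$ be families of metric spaces and $\alpha,\beta$ ordinals. (1) If $\mathcal{X}\in\mathfrak{C}_\beta$ and $\beta<\alpha$, then $\mathcal{X}\in\mathfrak{C}_\alpha$. (2) If $\mathcal{X},\mathcal{Y}\in\mathfrak{C}_\alpha$, then $\mathcal{X}\cup\mathcal{Y}\in\mathfrak{C}_\alpha$. (3) If $\mathcal{X}\prec\mathcal{Y}$ and $\mathcal{Y}\in\mathfrak{C}_\alpha$, then $\mathcal{X}\in\mathfrak{C}_\alpha$.
   Context: A family $\mathcal{U}$ of metric subspaces of a metric space $(X,d)$ is $r$-disjoint if $d(x,y)>r$ whenever $x\in U$, $y\in U'$, $U\neq U'$ in $\mathcal{U}$. For families $\mathcal{X},\mathcal{Y}$ and $R\in\mathbb{R}^{\mathbb{N}}$, $\mathcal{X}\xrightarrow{R}\mathcal{Y}$ means: there is an integer $k$ such that for each $X\in\mathcal{X}$ there are subcollections $\mathcal{U}_1,\dots,\mathcal{U}_k\subseteq\mathcal{Y}$ of subspaces of $X$, each $\mathcal{U}_i$ being $R_i$-disjoint, with $\bigcup_i\mathcal{U}_i$ covering $X$. A family is bounded if the diameters of its members are uniformly bounded. $\mathfrak{C}_0$ is the class of bounded families; for an ordinal $\alpha>0$, $\mathfrak{C}_\alpha$ is the class of families $\mathcal{X}$ such that for every $R\in\mathbb{R}^{\mathbb{N}}$ there exist $\beta<\alpha$ and $\mathcal{Y}\in\mathfrak{C}_\beta$ with $\mathcal{X}\xrightarrow{R}\mathcal{Y}$. $\mathcal{X}\prec\mathcal{Y}$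 means that every $X\in\mathcal{X}$ is a (metric) subspace of some $Y\in\mathcal{Y}$. *)

From Stdlib Require Import Reals.
Open Scope R_scope.

(* A metric space is represented as a carrier subset of an ambient type T
   together with a distance function on T.  The distance is normalized to be
   0 outside carrier x carrier, so each metric space has a unique representation. *)
Definition mspace (T : Type) : Type := ((T -> Prop) * (T -> T -> R))%type.

Definition carrier {T : Type} (M : mspace T) : T -> Prop := fst M.
Definition dist {T : Type} (M : mspace T) : T -> T -> R := snd M.

Definition is_metric {T : Type} (M : mspace T) : Prop :=
  (forall x y, carrier M x -> carrier M y -> 0 <= dist M x y) /\
  (forall x y, carrier M x -> carrier M y -> (dist M x y = 0 <-> x = y)) /\
  (forall x y, carrier M x -> carrier M y -> dist M x y = dist M y x) /\
  (forall x y z, carrier M x -> carrier M y -> carrier M z ->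
     dist M x z <= dist M x y + dist M y z) /\
  (forall x y, ~ (carrier M x /\ carrier M y) -> dist M x y = 0).

Definition mfam (T : Type) : Type := mspace T -> Prop.

Definition mfamily {T : Type} (F : mfam T) : Prop :=
  forall M, F M -> is_metric M.

Definition subspace {T : Type} (U X : mspace T) : Prop :=
  (forall x, carrier U x -> carrier X x) /\
  (forall x y, carrier U x -> carrier U y -> dist U x y = dist X x y).

Definition r_disjoint {T : Type} (d : T -> T -> R) (U : mfam T) (r : R) : Prop :=
  forall U1 U2, U U1 -> U U2 -> U1 <> U2 ->
    forall x y, carrier U1 x -> carrier U2 y -> d x y > r.

Definition arrow {T : Type} (Rs : nat -> R) (XX YY : mfam T) : Prop :=
  exists k : nat, forall X, XX X ->
    exists U : nat -> mfam T,
      (forall i, (1 <= i <= k)%nat ->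
         (forall V, U i V -> YY V /\ subspace V X) /\
         r_disjoint (dist X) (U i) (Rs i)) /\
      (forall x, carrier X x ->
         exists i, (1 <= i <= k)%nat /\ exists V, U i V /\ carrier V x).

Definition bounded {T : Type} (F : mfam T) : Prop :=
  exists D : R, forall M, F M ->
    forall x y, carrier M x -> carrier M y -> dist M x y <= D.

(* Ordinals are modelled by an arbitrary strict well-order (O, lt). *)
Definition wellorder {O : Type} (lt : O -> O -> Prop) : Prop :=
  well_founded lt /\
  (forall a b c, lt a b -> lt b c -> lt a c) /\
  (forall a b, lt a b \/ a = b \/ lt b a).

Definition is_zero {O : Type} (lt : O -> O -> Prop) (a : O) : Prop :=
  forall b, ~ lt b a.

(* Cls lt a F  <->  F belongs to the class \mathfrak{C}_a. *)
Inductive Cls {T O : Type} (lt : O -> O -> Prop) : O -> mfam T -> Prop :=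
| Cls_zero : forall a (F : mfam T),
    is_zero lt a -> mfamily F -> bounded F -> Cls lt a F
| Cls_succ : forall a (F : mfam T),
    ~ is_zero lt a -> mfamily F ->
    (forall Rs : nat -> R, exists b, lt b a /\
        exists G : mfam T, Cls lt b G /\ arrow Rs F G) ->
    Cls lt a F.

Definition funion {T : Type} (F G : mfam T) : mfam T :=
  fun M => F M \/ G M.

Definition prec {T : Type} (F G : mfam T) : Prop :=
  forall X, F X -> exists Y, G Y /\ subspace X Y.

(* (1) F -> F is an R-decomposition with k = 1, for every R.
   (2) and (3) go by well-founded induction on the ordinal.  For a union, the
   decompositions witnessing the two memberships are juxtaposed (padding the
   shorter one with empty families) and the two target ordinals are replaced by
   their maximum, using (1).  For X ≺ Y, a decomposition of Y into members of G
   restricts to one of X ⊆ Y into subspaces of members of G, a family that is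
   ≺ G and hence in a lower class by induction. *)
From Pilot Require Import Defs.
From Stdlib Require Import Reals.
From Stdlib Require Import ClassicalEpsilon Lia.

Section Decompositions.

Context {T : Type}.

Definition decomposes (Rs : nat -> R) (k : nat) (G : mfam T) (X : mspace T) : Prop :=
  exists U : nat -> mfam T,
    (forall i, (1 <= i <= k)%nat ->
       (forall V, U i V -> G V /\ subspace V X) /\
       r_disjoint (Defs.dist X) (U i) (Rs i)) /\
    (forall x, carrier X x ->
       exists i, (1 <= i <= k)%nat /\ exists V, U i V /\ carrier V x).

Lemma subspace_refl (X : mspace T) : subspace X X.
Proof. split; auto. Qed.

Lemma decomposes_self Rs (G : mfam T) X : G X -> decomposes Rs 1 G X.
Proof.
  intros HX. exists (fun _ V => V = X). split.
  - intros i _. split.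
    + intros V ->. split; [exact HX | apply subspace_refl].
    + intros U1 U2 -> -> Hne. congruence.
  - intros x Hx. exists 1%nat. split; [lia |]. exists X. auto.
Qed.

Lemma decomposes_widen Rs k k' (G : mfam T) X :
  (k <= k')%nat -> decomposes Rs k G X -> decomposes Rs k' G X.
Proof.
  intros Hk [U [HU Hcov]]. exists (fun i V => (i <= k)%nat /\ U i V). split.
  - intros i Hi. split.
    + intros V [Hik HV]. apply (HU i ltac:(lia)). exact HV.
    + intros U1 U2 [Hik H1] [_ H2] Hne. apply (HU i ltac:(lia)); auto.
  - intros x Hx. destruct (Hcov x Hx) as [i [Hi [V [HV HxV]]]].
    exists i. split; [lia |]. exists V. split; [split; [lia |] |]; auto.
Qed.

Lemma decomposes_mono Rs k (G G' : mfam T) X :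
  (forall V, G V -> G' V) -> decomposes Rs k G X -> decomposes Rs k G' X.
Proof.
  intros HGG' [U [HU Hcov]]. exists U. split; [| exact Hcov].
  intros i Hi. destruct (HU i Hi) as [HUG Hdisj]. split; [| exact Hdisj].
  intros V HV. destruct (HUG V HV). auto.
Qed.

Lemma arrow_self Rs (F : mfam T) : arrow Rs F F.
Proof. exists 1%nat. apply decomposes_self. Qed.

Lemma arrow_union Rs (F1 F2 G1 G2 : mfam T) :
  arrow Rs F1 G1 -> arrow Rs F2 G2 -> arrow Rs (funion F1 F2) (funion G1 G2).
Proof.
  intros [k1 H1] [k2 H2]. exists (Nat.max k1 k2). intros X [HX | HX].
  - apply (decomposes_widen _ k1); [lia |].
    apply (decomposes_mono _ _ G1); [now left | exact (H1 X HX)].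
  - apply (decomposes_widen _ k2); [lia |].
    apply (decomposes_mono _ _ G2); [now right | exact (H2 X HX)].
Qed.

End Decompositions.

Section Subspaces.

Context {T : Type}.

(* The case split keeps the distance 0 off the carrier, as [is_metric] demands. *)
Definition restrict (V X : mspace T) : mspace T :=
  (fun x => carrier V x /\ carrier X x,
   fun x y => if excluded_middle_informative
                 ((carrier V x /\ carrier X x) /\ (carrier V y /\ carrier X y))
              then Defs.dist V x y else 0).

Lemma restrict_dist (V X : mspace T) x y :
  carrier (restrict V X) x -> carrier (restrict V X) y ->
  Defs.dist (restrict V X) x y = Defs.dist V x y.
Proof.
  intros Hx Hy. unfold Defs.dist at 1, restrict; simpl.
  destruct excluded_middle_informative as [_ | Hn]; [reflexivity |].
  exfalso. apply Hn. split; assumption.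
Qed.

Lemma restrict_dist_out (V X : mspace T) x y :
  ~ (carrier (restrict V X) x /\ carrier (restrict V X) y) ->
  Defs.dist (restrict V X) x y = 0.
Proof.
  intros Hn. unfold Defs.dist, restrict; simpl.
  destruct excluded_middle_informative as [Hin | _]; [contradiction | reflexivity].
Qed.

Lemma is_metric_restrict (V X : mspace T) : is_metric V -> is_metric (restrict V X).
Proof.
  intros [Hpos [Hsep [Hsym [Htri _]]]].
  split; [| split; [| split; [| split]]]; [.. | apply restrict_dist_out].
  - intros x y Hx Hy. rewrite restrict_dist by assumption.
    apply Hpos; [apply Hx | apply Hy].
  - intros x y Hx Hy. rewrite restrict_dist by assumption.
    apply Hsep; [apply Hx | apply Hy].
  - intros x y Hx Hy. rewrite !restrict_dist by assumption.
    apply Hsym; [apply Hx | apply Hy].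
  - intros x y z Hx Hy Hz. rewrite !restrict_dist by assumption.
    apply Htri; [apply Hx | apply Hy | apply Hz].
Qed.

Lemma restrict_subspace_l (V X : mspace T) : subspace (restrict V X) V.
Proof. split; [intros x Hx; apply Hx | apply restrict_dist]. Qed.

Lemma restrict_subspace_r (V X Y : mspace T) :
  subspace V Y -> subspace X Y -> subspace (restrict V X) X.
Proof.
  intros [_ dVY] [_ dXY]. split; [intros x Hx; apply Hx |].
  intros x y Hx Hy. rewrite restrict_dist by assumption.
  rewrite dVY, dXY by (apply Hx || apply Hy). reflexivity.
Qed.

Definition subspaces_of (G : mfam T) : mfam T :=
  fun W => is_metric W /\ exists V, G V /\ subspace W V.

Lemma mfamily_subspaces_of (G : mfam T) : mfamily (subspaces_of G).
Proof. intros W [HW _]. exact HW. Qed.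

Lemma prec_subspaces_of (G : mfam T) : prec (subspaces_of G) G.
Proof. intros W [_ HW]. exact HW. Qed.

Lemma decomposes_subspace Rs k (G : mfam T) X Y :
  mfamily G -> subspace X Y -> decomposes Rs k G Y ->
  decomposes Rs k (subspaces_of G) X.
Proof.
  intros HmG HXY [U [HU Hcov]].
  exists (fun i W => exists V, U i V /\ W = restrict V X). split.
  - intros i Hi. destruct (HU i Hi) as [HUG Hdisj]. split.
    + intros W [V [HV ->]]. destruct (HUG V HV) as [HGV HVY]. split.
      * split; [apply is_metric_restrict; auto |].
        exists V. split; [exact HGV | apply restrict_subspace_l].
      * apply (restrict_subspace_r V X Y); assumption.
    + intros W1 W2 [V1 [HV1 ->]] [V2 [HV2 ->]] Hne x y [Hx1 Hx] [Hy2 Hy].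
      destruct HXY as [_ dXY]. rewrite dXY by assumption.
      apply (Hdisj V1 V2); auto. intros ->. apply Hne. reflexivity.
  - intros x Hx. destruct HXY as [HXY _].
    destruct (Hcov x (HXY x Hx)) as [i [Hi [V [HV HxV]]]].
    exists i. split; [exact Hi |]. exists (restrict V X). split.
    + exists V. auto.
    + split; assumption.
Qed.

Lemma arrow_prec Rs (XX YY G : mfam T) :
  mfamily G -> prec XX YY -> arrow Rs YY G -> arrow Rs XX (subspaces_of G).
Proof.
  intros HmG Hp [k HA]. exists k. intros X HX.
  destruct (Hp X HX) as [Y [HY HXY]].
  exact (decomposes_subspace Rs k G X Y HmG HXY (HA Y HY)).
Qed.

Lemma bounded_prec (XX YY : mfam T) : prec XX YY -> Defs.bounded YY -> Defs.bounded XX.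
Proof.
  intros Hp [D HD]. exists D. intros X HX x y Hx Hy.
  destruct (Hp X HX) as [Y [HY [HXY dXY]]]. rewrite dXY by assumption. auto.
Qed.

Lemma mfamily_union (F G : mfam T) : mfamily F -> mfamily G -> mfamily (funion F G).
Proof. intros HF HG M [HM | HM]; auto. Qed.

Lemma bounded_union (F G : mfam T) :
  Defs.bounded F -> Defs.bounded G -> Defs.bounded (funion F G).
Proof.
  intros [D1 H1] [D2 H2]. exists (Rmax D1 D2). intros M [HM | HM] x y Hx Hy.
  - eapply Rle_trans; [apply H1; eauto | apply Rmax_l].
  - eapply Rle_trans; [apply H2; eauto | apply Rmax_r].
Qed.

End Subspaces.

Section Classes.

Context {T O : Type} (lt : O -> O -> Prop).

Lemma Cls_mfamily a (F : mfam T) : Cls lt a F -> mfamily F.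
Proof. intros H. inversion H; assumption. Qed.

Lemma Cls_lt a b (F : mfam T) : Cls lt b F -> lt b a -> Cls lt a F.
Proof.
  intros HF Hba. apply Cls_succ.
  - intros Hz. exact (Hz b Hba).
  - exact (Cls_mfamily b F HF).
  - intros Rs. exists b. split; [exact Hba |].
    exists F. split; [exact HF | apply arrow_self].
Qed.

Lemma Cls_le a b (F : mfam T) : Cls lt b F -> b = a \/ lt b a -> Cls lt a F.
Proof. intros HF [-> | Hba]; [exact HF | exact (Cls_lt a b F HF Hba)]. Qed.

Hypothesis Hwo : wellorder lt.

Lemma lt_max_below a b1 b2 :
  lt b1 a -> lt b2 a ->
  exists c, lt c a /\ (b1 = c \/ lt b1 c) /\ (b2 = c \/ lt b2 c).
Proof.
  intros H1 H2. destruct Hwo as [_ [_ Htot]].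
  destruct (Htot b1 b2) as [H12 | [<- | H21]].
  - exists b2. auto.
  - exists b1. auto.
  - exists b1. auto.
Qed.

Lemma Cls_union a (F G : mfam T) :
  Cls lt a F -> Cls lt a G -> Cls lt a (funion F G).
Proof.
  destruct Hwo as [Hwf _]. revert F G.
  induction a as [a IH] using (well_founded_ind Hwf). intros F G HF HG.
  inversion HF as [? ? Hz HmF HbF | ? ? Hnz HmF HsF]; subst;
    inversion HG as [? ? Hz' HmG HbG | ? ? Hnz' HmG HsG]; subst;
    try contradiction.
  - apply Cls_zero; auto using mfamily_union, bounded_union.
  - apply Cls_succ; auto using mfamily_union. intros Rs.
    destruct (HsF Rs) as [b1 [Hb1 [F' [HF' HAF]]]].
    destruct (HsG Rs) as [b2 [Hb2 [G' [HG' HAG]]]].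
    destruct (lt_max_below a b1 b2 Hb1 Hb2) as [c [Hc [Hb1c Hb2c]]].
    exists c. split; [exact Hc |]. exists (funion F' G'). split.
    + apply IH; [exact Hc | apply (Cls_le c b1) | apply (Cls_le c b2)]; assumption.
    + apply arrow_union; assumption.
Qed.

Lemma Cls_prec a (XX YY : mfam T) :
  mfamily XX -> prec XX YY -> Cls lt a YY -> Cls lt a XX.
Proof.
  destruct Hwo as [Hwf _]. revert XX YY.
  induction a as [a IH] using (well_founded_ind Hwf). intros XX YY HmX Hp HY.
  inversion HY as [? ? Hz _ HbY | ? ? Hnz _ HsY]; subst.
  - apply Cls_zero; [exact Hz | exact HmX | exact (bounded_prec XX YY Hp HbY)].
  - apply Cls_succ; [exact Hnz | exact HmX |]. intros Rs.
    destruct (HsY Rs) as [b [Hb [G [HG HA]]]].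
    pose proof (Cls_mfamily b G HG) as HmG.
    exists b. split; [exact Hb |]. exists (subspaces_of G). split.
    + apply (IH b Hb _ G); auto using mfamily_subspaces_of, prec_subspaces_of.
    + exact (arrow_prec Rs XX YY G HmG Hp HA).
Qed.

End Classes.

Theorem lemma3p3 (T O : Type) (lt : O -> O -> Prop) (Hwo : wellorder lt)
  (XX YY : mfam T) (a b : O) (HX : mfamily XX) (HY : mfamily YY) :
  (Cls lt b XX -> lt b a -> Cls lt a XX) /\
  (Cls lt a XX -> Cls lt a YY -> Cls lt a (funion XX YY)) /\
  (prec XX YY -> Cls lt a YY -> Cls lt a XX).
Proof.
  split; [| split].
  - apply Cls_lt.
  - apply Cls_union; exact Hwo.
  - intros Hp. apply (Cls_prec lt Hwo a XX YY HX Hp).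
Qed.
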